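(* Let $G$ be a finite $p$-group and let $\alpha\in Z^2(G,\mathbb{C}^\times)$. Then $G$ has a faithful irreducible $\alpha$-representation if and only if, for every non-trivial central subgroup $N$ of $G$, the class $[\alpha]$ does not lie in the image of the inflation map $\operatorname{inf}:\mathrm{H}^2(G/N,\mathbb{C}^\times)\to\mathrm{H}^2(G,\mathbb{C}^\times)$.
   Context: All groups are finite and all representations are over $\mathbb{C}$. For a cocycle $\alpha\in Z^2(G,\mathbb{C}^\times)$, an $\alpha$-representation of $G$ is a map $\rho:G\to \mathrm{GL}(V)$ ($V$ finite-dimensional) with $\rho(1)=1_V$ and $\rho(g)\rho(h)=\alpha(g,h)\rho(gh)$ for all $g,h$; it is irreducible if $V$ has no proper nonzero $\rho(G)$-invariant subspace. Its (projective) kernel is $\ker\rho=\{g\in G:\rho(g)=\lambda I_V \text{ for some }\lambda\in\mathbb{C}^\times\}$, and $\rho$ is faithful if $\ker\rho=1$. For $N\trianglelefteq G$ the inflation map sends the class of $\beta\in Z^2(G/N,\mathbb{C}^\times)$ to the class of $(x,y)\mapsto\beta(xN,yN)$. *)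

From mathcomp Require Import all_boot all_algebra all_fingroup all_solvable.
From mathcomp Require Import Rstruct complex.
Set Implicit Arguments. Unset Strict Implicit. Unset Printing Implicit Defensive.
Import GRing.Theory Num.Theory.
Local Open Scope ring_scope.

Definition C : numClosedFieldType := complex Rdefinitions.R.

Definition is_cocycle {gT : finGroupType} (G : {set gT}) (alpha : gT -> gT -> C) : Prop :=
  [/\ forall x y, x \in G -> y \in G -> alpha x y != 0,
      alpha 1%g 1%g = 1 &
      forall x y z, x \in G -> y \in G -> z \in G ->
        alpha x y * alpha (x * y)%g z = alpha y z * alpha x (y * z)%g].

Section Defs.
Variable gT : finGroupType.

(* rho is an alpha-representation of G on V = C^n (column vectors, rho g
   acting by left multiplication): rho g invertible, rho 1 = 1,
   rho g rho h = alpha(g,h) rho (gh). *)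
Definition is_alpha_rep (G : {set gT}) (alpha : gT -> gT -> C) n
    (rho : gT -> 'M[C]_n) : Prop :=
  [/\ forall g, g \in G -> rho g \in unitmx,
      rho 1%g = 1%:M &
      forall g h, g \in G -> h \in G ->
        rho g *m rho h = alpha g h *: rho (g * h)%g].

(* A subspace W of column vectors is encoded by the row space of the
   matrix U whose rows span W (transposed); invariance of W under left
   multiplication by rho g reads (U *m (rho g)^T <= U)%MS. *)
Definition irreducible_rep (G : {set gT}) n (rho : gT -> 'M[C]_n) : Prop :=
  (0 < n)%N /\
  forall U : 'M[C]_n,
    (forall g, g \in G -> (U *m (rho g)^T <= U)%MS) ->
    U = 0 \/ (U == (1%:M : 'M[C]_n))%MS.

Definition proj_kernel (G : {set gT}) n (rho : gT -> 'M[C]_n) : gT -> Prop :=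
  fun g => g \in G /\ exists lam : C, lam != 0 /\ rho g = lam%:M.

Definition faithful_rep (G : {set gT}) n (rho : gT -> 'M[C]_n) : Prop :=
  forall g, proj_kernel G rho g -> g = 1%g.

(* [alpha] lies in the image of inf : H^2(G/N, C^x) -> H^2(G, C^x):
   there is a cocycle beta on G/N such that alpha is cohomologous to the
   inflated cocycle (x,y) |-> beta(xN, yN), i.e. they differ by the
   coboundary (x,y) |-> mu(x) mu(y) / mu(xy) of some mu : G -> C^x. *)
Definition in_inflation_image (G N : {group gT}) (alpha : gT -> gT -> C) : Prop :=
  exists (beta : coset_of N -> coset_of N -> C) (mu : gT -> C),
    [/\ is_cocycle (G / N)%g beta,
        forall x, x \in G -> mu x != 0 &
        forall x y, x \in G -> y \in G ->
          alpha x y = beta (coset N x) (coset N y) * (mu x * mu y / mu (x * y)%g)].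

End Defs.

(** If [alpha] is inflated from G/N with N central, then alpha (z, g) =
    alpha (g, z) for z in N, so rho z commutes with rho(G) and is a scalar by
    Schur's lemma: no irreducible alpha-representation is faithful.
    Conversely, the elements acting by scalars in an irreducible
    alpha-representation rho form a normal subgroup K; if rho is not
    faithful, K is nontrivial and, G being nilpotent, so is N = K :&: 'Z(G).
    Dividing rho x by the scalar relating it to rho at a fixed representative
    of xN makes rho constant on N-cosets; the correspondingly rescaled
    cocycle, cohomologous to alpha, then depends only on cosets, i.e. it is
    inflated from G/N. *)
From mathcomp Require Import all_boot all_algebra all_fingroup all_solvable.
From mathcomp Require Import Rstruct complex ring.
From Stdlib Require Import Classical.
Set Implicit Arguments. Unset Strict Implicit. Unset Printing Implicit Defensive.
Import GRing.Theory.
Local Open Scope ring_scope.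

Lemma is_scalar_mxZ (F : fieldType) n (c : F) (A : 'M[F]_n) :
  c != 0 -> is_scalar_mx (c *: A) = is_scalar_mx A.
Proof.
have scalarZ d (B : 'M[F]_n) : is_scalar_mx B -> is_scalar_mx (d *: B).
  by case/is_scalar_mxP=> b ->; rewrite scale_scalar_mx scalar_mx_is_scalar.
move=> c_nz; apply/idP/idP; last exact: scalarZ.
by move/(scalarZ c^-1); rewrite scalerA mulVf ?scale1r.
Qed.

Definition coboundary (gT : finGroupType) (mu : gT -> C) (x y : gT) : C :=
  mu x * mu y / mu (x * y)%g.

Section Cocycles.

Variables (gT : finGroupType) (G : {group gT}) (alpha : gT -> gT -> C).
Hypothesis alphaC : is_cocycle G alpha.

Lemma cocycle_neq0 x y : x \in G -> y \in G -> alpha x y != 0.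
Proof. by have [nz _ _] := alphaC; apply: nz. Qed.

Lemma cocycle1g x : x \in G -> alpha 1%g x = 1.
Proof.
move=> xG; have [_ a11 co] := alphaC; have G1 := group1 G.
have /eqP := co _ _ _ G1 G1 xG; rewrite !mul1g a11 mul1r.
by rewrite -{1}[alpha 1%g x]mulr1 eq_sym (inj_eq (mulfI (cocycle_neq0 G1 xG))) => /eqP.
Qed.

Lemma cocycleg1 x : x \in G -> alpha x 1%g = 1.
Proof.
move=> xG; have [_ a11 co] := alphaC; have G1 := group1 G.
have /eqP := co _ _ _ xG G1 G1; rewrite !mulg1 a11 mul1r.
by rewrite -[X in _ == X]mulr1 (inj_eq (mulfI (cocycle_neq0 xG G1))) => /eqP.
Qed.

Lemma cocycleM_coboundary (mu : gT -> C) :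
  {in G, forall x, mu x != 0} -> mu 1%g = 1 ->
  is_cocycle G (fun x y => alpha x y * coboundary mu x y).
Proof.
have [nz a11 co] := alphaC; move=> mu_nz mu1; rewrite /coboundary; split.
- move=> x y xG yG; rewrite !mulf_neq0 ?invr_eq0 ?nz ?mu_nz ?groupM //.
- by rewrite a11 mulg1 mu1 !mul1r invr1.
move=> x y z xG yG zG; rewrite -mulgA.
have m12 : mu (x * y)%g != 0 by rewrite mu_nz ?groupM.
have m23 : mu (y * z)%g != 0 by rewrite mu_nz ?groupM.
have m123 : mu (x * (y * z))%g != 0 by rewrite mu_nz ?groupM.
transitivity (alpha x y * alpha (x * y)%g z * (mu x * mu y * mu z / mu (x * (y * z))%g)).
  by field; rewrite m12 m123.
by rewrite co //; field; rewrite m23 m123.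
Qed.

End Cocycles.

Section AlphaRepresentations.

Variables (gT : finGroupType) (G : {group gT}) (alpha : gT -> gT -> C).
Hypothesis alphaC : is_cocycle G alpha.

Lemma alpha_rep_unitmx n (rho : gT -> 'M[C]_n) : rho 1%g = 1%:M ->
    {in G &, forall g h, rho g *m rho h = alpha g h *: rho (g * h)%g} ->
  {in G, forall g, rho g \in unitmx}.
Proof.
move=> rho1 rhoM g gG; have giG : (g^-1 \in G)%g by rewrite groupV.
suff /mulmx1_unit[] : rho g *m ((alpha g g^-1%g)^-1 *: rho g^-1%g) = 1%:M by [].
rewrite -scalemxAr rhoM // mulgV rho1 scalerA.
by rewrite mulVf ?scale1r ?(cocycle_neq0 alphaC) ?groupV.
Qed.

Lemma alpha_rep_neq0 n (rho : gT -> 'M[C]_n) g :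
  is_alpha_rep G alpha rho -> (0 < n)%N -> g \in G -> rho g != 0.
Proof.
case: n rho => // n rho [unit_rho _ _] _ gG; apply: contraTneq (unit_rho g gG) => ->.
by rewrite unitmxE det0 unitr0.
Qed.

Lemma scale_alpha_repM n (rho : gT -> 'M[C]_n) (nu : gT -> C) :
    {in G, forall x, nu x != 0} ->
    {in G &, forall g h, rho g *m rho h = alpha g h *: rho (g * h)%g} ->
  {in G &, forall g h, (nu g *: rho g) *m (nu h *: rho h) =
                       (alpha g h * coboundary nu g h) *: (nu (g * h)%g *: rho (g * h)%g)}.
Proof.
move=> nu_nz rhoM g h gG hG; rewrite -scalemxAl -scalemxAr rhoM // !scalerA.
by congr (_ *: _); rewrite /coboundary; field; rewrite nu_nz ?groupM.
Qed.

Lemma scalar_central_proj_kernel n (rho : gT -> 'M[C]_n) z :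
    is_alpha_rep G alpha rho -> irreducible_rep G rho -> z \in G ->
    {in G, forall g, rho z *m rho g = rho g *m rho z} ->
  proj_kernel G rho z.
Proof.
move=> rep [n_gt0 irr] zG rho_z_central.
have [a /eigenvalueP [v vE v_nz]] := eigenvalue_closed (rho z)^T n_gt0.
pose U := eigenspace (rho z)^T a.
have U_inv g : g \in G -> (U *m (rho g)^T <= U)%MS.
  move=> gG; rewrite sub_kermx -mulmxA.
  have -> : (rho g)^T *m ((rho z)^T - a%:M) = ((rho z)^T - a%:M) *m (rho g)^T.
    by rewrite mulmxBl mulmxBr -!trmx_mul rho_z_central // scalar_mxC.
  by rewrite mulmxA (sub_kermxP (submx_refl _)) mul0mx.
have U_nz : U != 0.
  apply: contraNneq v_nz => U0; rewrite -submx0 -U0.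
  by rewrite sub_kermx mulmxBr vE mul_mx_scalar subrr.
have /andP[_ U_full] : (U == 1%:M)%MS.
  by case: (irr U U_inv) => // U0; rewrite U0 eqxx in U_nz.
move: U_full; rewrite sub_kermx mul1mx subr_eq0 => /eqP rho_zT.
have rho_z : rho z = a%:M by rewrite -[rho z]trmxK rho_zT tr_scalar_mx.
split=> //; exists a; split=> //; apply: contraNneq (alpha_rep_neq0 rep n_gt0 zG).
by rewrite rho_z => ->; rewrite raddf0.
Qed.

Definition regular_alpha_rep (g : gT) : 'M[C]_#|G| :=
  \matrix_(i, j) (if enum_val i == (g * enum_val j)%g then alpha g (enum_val j) else 0).

Lemma regular_alpha_repP : is_alpha_rep G alpha regular_alpha_rep.
Proof.
have rho1 : regular_alpha_rep 1%g = 1%:M.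
  apply/matrixP=> i j; rewrite !mxE mul1g (inj_eq enum_val_inj).
  by case: eqP => // _; rewrite (cocycle1g alphaC) ?enum_valP.
have rhoM : {in G &, forall g h, regular_alpha_rep g *m regular_alpha_rep h
                                   = alpha g h *: regular_alpha_rep (g * h)%g}.
  move=> g h gG hG; apply/matrixP=> i k; rewrite !mxE.
  set x := enum_val k; have xG : x \in G := enum_valP k.
  pose j := enum_rank_in (group1 G) (h * x)%g.
  have jE : enum_val j = (h * x)%g by rewrite enum_rankK_in ?groupM.
  rewrite (bigD1 j) //= big1 ?addr0 => [|j' j'j]; last first.
    rewrite !mxE; case: (eqVneq (enum_val j') (h * x)%g) => [j'E|_]; last by rewrite mulr0.
    by case/eqP: j'j; apply: enum_val_inj; rewrite j'E jE.
  rewrite !mxE jE eqxx -mulgA; case: ifP => _; last by rewrite mul0r mulr0.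
  by have [_ _ ->] := alphaC; rewrite // mulrC.
by split=> //; apply: alpha_rep_unitmx.
Qed.

Lemma alpha_subrep n (rho : gT -> 'M[C]_n) (U : 'M[C]_n) :
    is_alpha_rep G alpha rho -> (forall g, g \in G -> (U *m (rho g)^T <= U)%MS) ->
  exists rhoU : gT -> 'M[C]_(\rank U), is_alpha_rep G alpha rhoU.
Proof.
move=> [_ rho1 rhoM] U_inv.
have stableU g : g \in G -> stablemx (row_base U) (rho g)^T.
  by move=> gG; rewrite !(eqmxMr _ (eq_row_base U)) !eq_row_base U_inv.
pose rhoU g := (conjmx (row_base U) (rho g)^T)^T.
have rhoU1 : rhoU 1%g = 1%:M.
  by rewrite /rhoU rho1 tr_scalar_mx conjmx_scalar ?row_base_free // tr_scalar_mx.
have rhoUM : {in G &, forall g h, rhoU g *m rhoU h = alpha g h *: rhoU (g * h)%g}.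
  move=> g h gG hG; rewrite /rhoU -trmx_mul -conjmxM ?inE ?stableU ?row_base_free //.
  by rewrite -trmx_mul rhoM // linearZ /= /conjmx -scalemxAr -scalemxAl linearZ.
by exists rhoU; split=> //; apply: alpha_rep_unitmx.
Qed.

Lemma exists_irreducible_alpha_rep :
  exists n (rho : gT -> 'M[C]_n), is_alpha_rep G alpha rho /\ irreducible_rep G rho.
Proof.
suff: forall n (rho : gT -> 'M[C]_n), (0 < n)%N -> is_alpha_rep G alpha rho ->
    exists n (rho : gT -> 'M[C]_n), is_alpha_rep G alpha rho /\ irreducible_rep G rho.
  by apply; [apply: cardG_gt0 | apply: regular_alpha_repP].
elim/ltn_ind=> n IHn rho n_gt0 rep.
have [irr | not_irr] := classic (irreducible_rep G rho); first by exists n, rho.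
have [U U_inv /not_or_and[U_nz U_not_full]] : exists2 U : 'M[C]_n,
    forall g, g \in G -> (U *m (rho g)^T <= U)%MS & ~ (U = 0 \/ (U == 1%:M)%MS).
  apply: NNPP => no_U; apply: not_irr; split=> // U U_inv.
  by apply: NNPP => U_nontrivial; apply: no_U; exists U.
have [rhoU repU] := alpha_subrep rep U_inv.
apply: (IHn _ _ rhoU) => //; last by rewrite lt0n mxrank_eq0; apply/eqP.
rewrite ltn_neqAle rank_leq_col andbT; apply: contra_not_neq U_not_full => rankU.
by rewrite submx1 /= sub1mx /row_full rankU.
Qed.

End AlphaRepresentations.

Lemma faithful_irr_not_inflated (gT : finGroupType) (G : {group gT})
    (alpha : gT -> gT -> C) n (rho : gT -> 'M[C]_n) :
    is_alpha_rep G alpha rho -> irreducible_rep G rho -> faithful_rep G rho ->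
  forall N : {group gT}, (N \subset 'Z(G))%g -> N :!=: 1%g ->
    ~ in_inflation_image G N alpha.
Proof.
move=> rep irr faithful N sNZ ntN [beta [mu [betaC mu_nz alphaE]]].
have [z zN z_neq1] := trivgPn _ ntN.
have /centerP[zG z_central] := subsetP sNZ z zN.
suff /faithful/eqP : proj_kernel G rho z by rewrite (negbTE z_neq1).
apply: (scalar_central_proj_kernel rep irr zG) => g gG.
case: rep => _ _ rhoM; rewrite !rhoM // (z_central g gG); congr (_ *: _).
rewrite !alphaE -?(z_central g gG) // coset_id //.
have gNG : coset N g \in (G / N)%g by apply: mem_quotient.
by rewrite (cocycle1g betaC) ?(cocycleg1 betaC) // (mulrC (mu z)).
Qed.

Section InflationCriterion.

Variables (gT : finGroupType) (G N : {group gT}).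
Hypotheses (sNG : (N \subset G)%g) (nNG : (G \subset 'N(N))%g).

Local Notation transversal x := (repr (coset N x)).

Lemma transversal_in_rcoset x : x \in G -> exists2 m, m \in N & transversal x = (m * x)%g.
Proof.
move=> xG; apply/rcosetP; rewrite -val_coset ?(subsetP nNG) //.
exact: mem_repr_coset.
Qed.

Lemma transversal_in x : x \in G -> transversal x \in G.
Proof.
by move=> xG; have [m mN ->] := transversal_in_rcoset xG; rewrite groupM // (subsetP sNG).
Qed.

Lemma mul_invtransversal_in x : x \in G -> (x * (transversal x)^-1 \in N)%g.
Proof.
by move=> xG; have [m mN ->] := transversal_in_rcoset xG; rewrite invMg mulKVg groupV.
Qed.

Lemma coset_invariant_in_inflation_image (alpha gamma : gT -> gT -> C) (mu : gT -> C) :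
    is_cocycle G gamma ->
    {in G &, forall x y, gamma x y = gamma (transversal x) (transversal y)} ->
    {in G, forall x, mu x != 0} ->
    {in G &, forall x y, alpha x y = gamma x y * coboundary mu x y} ->
  in_inflation_image G N alpha.
Proof.
move=> gammaC gamma_inv mu_nz alphaE.
pose beta a b := gamma (repr a) (repr b).
have betaE : {in G &, forall x y, beta (coset N x) (coset N y) = gamma x y}.
  by move=> x y xG yG; rewrite /beta -gamma_inv.
have quoP a : a \in (G / N)%g -> exists2 x, x \in G & a = coset N x.
  by case/morphimP=> x _ xG ->; exists x.
have cosetM : {in G &, {morph coset N : x y / (x * y)%g}}.
  by move=> x y xG yG; rewrite coset_morphM ?(subsetP nNG).
case: gammaC => gamma_nz gamma11 gammaM.
exists beta, mu; split=> //; last by move=> x y xG yG; rewrite alphaE ?betaE.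
split; last 1 first.
- move=> a b c /quoP[x xG ->] /quoP[y yG ->] /quoP[z zG ->].
  by rewrite -!cosetM ?groupM // !betaE ?groupM ?gammaM.
- by move=> a b /quoP[x xG ->] /quoP[y yG ->]; rewrite betaE ?gamma_nz.
- by rewrite /beta repr_coset1.
Qed.

Lemma rep_coset_invariant (gamma : gT -> gT -> C) n (sigma : gT -> 'M[C]_n) :
    {in G, forall x, sigma x != 0} ->
    {in G &, forall x y, sigma x *m sigma y = gamma x y *: sigma (x * y)%g} ->
    {in G, forall x, sigma x = sigma (transversal x)} ->
  {in G &, forall x y, gamma x y = gamma (transversal x) (transversal y)}.
Proof.
move=> sigma_nz sigmaM sigma_inv x y xG yG.
have [txG tyG] := (transversal_in xG, transversal_in yG).
have transM : transversal (x * y)%g = transversal (transversal x * transversal y)%g.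
  by rewrite !coset_morphM ?(subsetP nNG) // !coset_reprK.
have /eqP : gamma x y *: sigma (x * y)%g
          = gamma (transversal x) (transversal y) *: sigma (x * y)%g.
  rewrite -sigmaM // [in RHS]sigma_inv ?groupM // transM -sigma_inv ?groupM //.
  by rewrite -sigmaM // -!sigma_inv.
rewrite -subr_eq0 -scalerBl scaler_eq0 (negbTE (sigma_nz _ _)) ?groupM // orbF.
by rewrite subr_eq0 => /eqP.
Qed.

End InflationCriterion.

Section ScalarNormalSubgroup.

Variables (gT : finGroupType) (G N : {group gT}) (alpha : gT -> gT -> C).
Variables (n : nat) (rho : gT -> 'M[C]_n.+1).
Hypotheses (alphaC : is_cocycle G alpha) (rep : is_alpha_rep G alpha rho).
Hypotheses (sNG : (N \subset G)%g) (nNG : (G \subset 'N(N))%g).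
Hypothesis N_scalar : {in N, forall z, is_scalar_mx (rho z)}.

Local Notation transversal x := (repr (coset N x)).

(* x = z * transversal x with z in N, and rho z is the scalar rho z 0 0. *)
Definition coset_scale (x : gT) : C :=
  let z := (x * (transversal x)^-1)%g in rho z 0 0 / alpha z (transversal x).

Lemma rho_transversal x : x \in G -> rho x = coset_scale x *: rho (transversal x).
Proof.
move=> xG; have [_ _ rhoM] := rep; rewrite /coset_scale.
set z := (x * _)%g; have zN : z \in N := mul_invtransversal_in nNG xG.
have zG := subsetP sNG z zN; have txG := transversal_in sNG nNG xG.
have /is_scalar_mxP[a rho_z] := N_scalar zN.
have := rhoM z _ zG txG; rewrite mulgVK rho_z mul_scalar_mx mxE eqxx mulr1n => rho_zt.
by rewrite mulrC -scalerA rho_zt scalerA mulVf ?scale1r ?(cocycle_neq0 alphaC).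
Qed.

Lemma coset_scale_neq0 x : x \in G -> coset_scale x != 0.
Proof.
move=> xG; apply: contraNneq (alpha_rep_neq0 rep (ltn0Sn n) xG) => scale0.
by rewrite rho_transversal // scale0 scale0r.
Qed.

Lemma coset_scale1 : coset_scale 1%g = 1.
Proof.
have [_ rho1 _] := rep; have [_ a11 _] := alphaC.
by rewrite /coset_scale coset_id // repr_coset1 mulgV rho1 mxE a11 divr1.
Qed.

Lemma scalar_normal_in_inflation_image : in_inflation_image G N alpha.
Proof.
pose nu x := (coset_scale x)^-1.
have nu_nz : {in G, forall x, nu x != 0} by move=> x xG; rewrite invr_eq0 coset_scale_neq0.
have rho_nu x : x \in G -> nu x *: rho x = rho (transversal x).
  by move=> xG; rewrite rho_transversal // scalerA mulVf ?scale1r ?coset_scale_neq0.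
apply: (coset_invariant_in_inflation_image nNG
          (gamma := fun x y => alpha x y * coboundary nu x y) (mu := coset_scale)).
- by apply: cocycleM_coboundary; rewrite // /nu coset_scale1 invr1.
- apply: (rep_coset_invariant sNG nNG (sigma := fun x => nu x *: rho x)).
  + by move=> x xG; rewrite rho_nu ?(alpha_rep_neq0 rep) ?transversal_in.
  + by apply: scale_alpha_repM => //; case: rep.
  + by move=> x xG; rewrite !rho_nu ?transversal_in // coset_reprK.
- exact: coset_scale_neq0.
move=> x y xG yG; rewrite /coboundary /nu.
by field; rewrite !coset_scale_neq0 ?groupM.
Qed.

End ScalarNormalSubgroup.

Section ScalarKernel.

Variables (gT : finGroupType) (G : {group gT}) (alpha : gT -> gT -> C).
Variables (n : nat) (rho : gT -> 'M[C]_n).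
Hypotheses (alphaC : is_cocycle G alpha) (rep : is_alpha_rep G alpha rho).

Definition scalar_kernel : {set gT} := [set x in G | is_scalar_mx (rho x)].

Lemma scalar_kernel_sub : (scalar_kernel \subset G)%g.
Proof. by apply/subsetP=> x; rewrite inE => /andP[]. Qed.

Lemma scalar_kernel_group_set : group_set scalar_kernel.
Proof.
have [_ rho1 rhoM] := rep.
apply/group_setP; split; first by rewrite inE group1 rho1 scalar_mx_is_scalar.
move=> x y; rewrite !inE.
move=> /andP[xG /is_scalar_mxP[a rho_x]] /andP[yG /is_scalar_mxP[b rho_y]].
rewrite groupM //= -(is_scalar_mxZ _ (cocycle_neq0 alphaC xG yG)) -rhoM //.
by rewrite rho_x rho_y -scalar_mxM scalar_mx_is_scalar.
Qed.

Canonical scalar_kernel_group := Group scalar_kernel_group_set.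

Lemma scalar_kernel_normal : (scalar_kernel <| G)%g.
Proof.
have [_ rho1 rhoM] := rep.
rewrite /normal scalar_kernel_sub; apply/subsetP=> h hG; rewrite inE.
apply/subsetP=> _ /imsetP[x /setIdP[xG /is_scalar_mxP[a rho_x]] ->].
have hiG : (h^-1 \in G)%g by rewrite groupV.
(* rho h^-1 rho x rho h is a scalar, and a nonzero multiple of rho (x ^ h) *)
rewrite inE groupJ //= conjgE.
rewrite -(is_scalar_mxZ _ (cocycle_neq0 alphaC hiG (groupM xG hG))) -rhoM ?groupM //.
rewrite -(is_scalar_mxZ _ (cocycle_neq0 alphaC xG hG)) scalemxAr -rhoM //.
rewrite rho_x mul_scalar_mx -scalemxAr rhoM // mulVg rho1.
by rewrite !scale_scalar_mx scalar_mx_is_scalar.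
Qed.

End ScalarKernel.

Lemma not_inflated_faithful_irr (gT : finGroupType) (G : {group gT})
    (alpha : gT -> gT -> C) :
    nilpotent G -> is_cocycle G alpha ->
    (forall N : {group gT}, (N \subset 'Z(G))%g -> N :!=: 1%g ->
      ~ in_inflation_image G N alpha) ->
  exists n (rho : gT -> 'M[C]_n),
    [/\ is_alpha_rep G alpha rho, irreducible_rep G rho & faithful_rep G rho].
Proof.
move=> nilG alphaC not_inflated.
have [n [rho [rep irr]]] := exists_irreducible_alpha_rep alphaC.
have [n_gt0 _] := irr; case: n n_gt0 rho rep irr => // n _ rho rep irr.
exists n.+1, rho; split=> // g [gG [lam [_ rho_g]]]; apply: NNPP => g_neq1.
pose K := scalar_kernel_group alphaC rep.
have ntK : (K :!=: 1)%g.
  by apply/trivgPn; exists g; [rewrite inE gG rho_g scalar_mx_is_scalar | apply/eqP].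
have ntKZ := meet_center_nil nilG (scalar_kernel_normal alphaC rep) ntK.
apply: (not_inflated _ (subsetIr K _) ntKZ).
have sKZG : (K :&: 'Z(G) \subset G)%g := subset_trans (subsetIr _ _) (center_sub G).
apply: (scalar_normal_in_inflation_image alphaC rep sKZG).
  exact: normal_norm (sub_center_normal (subsetIr _ _)).
by move=> z /setIP[/setIdP[]].
Qed.

Theorem theorem3p1 (p : nat) (gT : finGroupType) (G : {group gT})
    (alpha : gT -> gT -> C) :
  prime p -> (p.-group G)%g -> is_cocycle G alpha ->
  ((exists (n : nat) (rho : gT -> 'M[C]_n),
      [/\ is_alpha_rep G alpha rho, irreducible_rep G rho & faithful_rep G rho])
   <->
   (forall N : {group gT}, (N \subset 'Z(G))%g -> N :!=: 1%g ->
      ~ in_inflation_image G N alpha)).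
Proof.
move=> _ pG alphaC; split.
- move=> [n [rho [rep irr faithful]]].
  exact: faithful_irr_not_inflated rep irr faithful.
- exact: not_inflated_faithful_irr (pgroup_nil pG) alphaC.
Qed.
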